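(* Let $L\ge1$, $k\ge2$ be integers with $k\mid L$, let $r$ be a positive integer, $p$ a positive integer, $l_j=(j-1)\frac Lk+1$ for $j=1,\dots,k$ and $l_{k+1}=2L$. Let $u\in\{1,\dots,k-1\}$, let $m_u$ be an $(l_{u+1}+2-l_u)$-bit string and $m'_{u+1}$ a $(2L+p+2-l_{u+1})$-bit string, and suppose that for some $s_0\in\{0,1,\dots,r-1\}$, $$\Big|m'_{u+1}-\big(\tfrac{s_0}{r}\big)_{\{l_{u+1},2L+1+p\}}\Big|<2^p,\qquad (m'_{u+1})_{[1,2]}=\big(\tfrac{s_0}{r}\big)_{\{l_{u+1},l_{u+1}+1\}},$$ and $$d_{l_{u+1}+2-l_u}\Big(m_u,\big(\tfrac{s_0}{r}\big)_{\{l_u,l_{u+1}+1\}}\Big)\le 1.$$ Then there exists $c_u\in\{-1,0,1\}$ such that (the integer formed by the last two bits of $m_u$)$+c_u\equiv (m'_{u+1})_{[1,2]}\pmod 4$, and for any such $c_u$, letting $prefix_u=(m_u+c_u)\bmod 2^{l_{u+1}+2-l_u}$ (as an $(l_{u+1}+2-l_u)$-bit string) and $m'_u=prefix_u\circ(m'_{u+1})_{[3,\,2L+p+2-l_{u+1}]}$, we have $$\Big|m'_u-\big(\tfrac{s_0}{r}\big)_{\{l_u,2L+1+p\}}\Big|<2^p\quad\text{and}\quad (m'_u)_{[1,2]}=\big(\tfrac{s_0}{r}\big)_{\{l_u,l_u+1\}}.$$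
   Context: Bit strings are identified with the binary integers they represent (most significant bit first); $\circ$ denotes concatenation of bit strings. For a bit string $x=x_1\cdots x_n$, $x_{[i,j]}=x_i\cdots x_j$. For real $\omega$ with binary fractional expansion $0.b_1b_2\cdots$ (not ending in infinitely many 1's), $\omega_{\{i,j\}}=b_i\cdots b_j$. For two $t$-bit strings $x,y$, $d_t(x,y)=\min(|x-y|,2^t-|x-y|)$. The construction of $m'_u$ from $m_u$ and $m'_{u+1}$ is one step of the classical correction procedure CombineResults. *)

(* Bit strings are natural numbers together with a length. *)
From mathcomp Require Import all_boot all_order all_algebra.
Set Implicit Arguments. Unset Strict Implicit. Unset Printing Implicit Defensive.
Import Order.TTheory GRing.Theory Num.Theory.

(* x_{[i,j]} for an n-bit string x (bits numbered 1..n, MSB first). *)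
Definition bits_sub (n x i j : nat) : nat := (x %/ 2 ^ (n - j)) %% 2 ^ (j - i + 1).

(* omega_{i,j} for omega = s / r in [0,1): bits b_i..b_j of the binary
   expansion (the non-terminating-in-1s expansion, i.e. floor). *)
Definition frac_bits (s r i j : nat) : nat := (s * 2 ^ j %/ r) %% 2 ^ (j - i + 1).

Definition concat_bits (x y m : nat) : nat := x * 2 ^ m + y.

Definition dist_t (t x y : nat) : nat := minn `|x - y|%N (2 ^ t - `|x - y|%N).

Definition lpos (L k j : nat) : nat :=
  if j == k.+1 then 2 * L else (j - 1) * (L %/ k) + 1.

From mathcomp Require Import all_boot all_order all_algebra zify.
Set Implicit Arguments. Unset Strict Implicit. Unset Printing Implicit Defensive.
Import GRing.Theory.

(* With E = 2L+1+p and X = floor(s0 2^E / r), every bit field of s0/r up to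
   position E is a window of X.  Since m_u is at cyclic distance at most 1 from
   its window, adding some c in {-1,0,1} modulo 2^len makes it exact; as
   len >= 2 this c is already determined by the two bits m_u shares with
   m'_{u+1}.  Splicing the corrected prefix onto the low bits of m'_{u+1}
   keeps the error of m'_{u+1}, because both sides agree above those bits. *)

Lemma lpos_succ_le (L k u : nat) : 0 < L -> k %| L -> u < k ->
  lpos L k u <= lpos L k u.+1 <= L.
Proof.
move=> L_gt0 kL u_lt.
have k_gt0 : 0 < k by apply: leq_ltn_trans u_lt.
have m_gt0 : 0 < L %/ k by rewrite divn_gt0 // dvdn_leq.
have mk : L %/ k * k = L := divnK kL.
rewrite /lpos !ifN_eq ?eqSS; try lia.
rewrite subSS subn0 leq_add2r leq_mul2r leq_subr orbT /=.
nia.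
Qed.

Lemma frac_bits_window (s r i j E : nat) : j <= E ->
  frac_bits s r i j = s * 2 ^ E %/ r %/ 2 ^ (E - j) %% 2 ^ (j - i + 1).
Proof.
move=> jE; rewrite /frac_bits -{1}(subnKC jE) (expnD 2 j) mulnA -divnMA.
by rewrite divnMr ?expn_gt0.
Qed.

Lemma bits_sub_top2 (n x : nat) : bits_sub (n + 2) x 1 2 = x %/ 2 ^ n %% 2 ^ 2.
Proof. by rewrite /bits_sub addnK. Qed.

Lemma bits_sub_drop2 (n x : nat) : 0 < n ->
  bits_sub (n + 2) x 3 (n + 2) = x %% 2 ^ n.
Proof. by move=> n_gt0; rewrite /bits_sub subnn divn1; congr (_ %% 2 ^ _); lia. Qed.

Lemma modn_pow2_split (x n w : nat) :
  x %% 2 ^ (n + w) = x %/ 2 ^ n %% 2 ^ w * 2 ^ n + x %% 2 ^ n.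
Proof.
have dvd_n : 2 ^ n %| 2 ^ (n + w) by rewrite dvdn_exp2l ?leq_addr.
by rewrite modn_divl -expnD [w + n]addnC -(modn_dvdm x dvd_n) -divn_eq.
Qed.

Lemma modn_pow2_divn (x h w : nat) :
  x %% 2 ^ (h + w) %/ 2 ^ h = x %/ 2 ^ h %% 2 ^ w.
Proof. by rewrite modn_divl -expnD addnC. Qed.

Lemma splice_high_bits (t z x n h w : nat) : z < 2 ^ n ->
  t = x %/ 2 ^ n %% 2 ^ (h + w) ->
  (t * 2 ^ n + z) %/ 2 ^ (n + h) %% 2 ^ w = x %/ 2 ^ (n + h) %% 2 ^ w.
Proof.
move=> z_lt ->; rewrite !(expnD 2 n h) !divnMA divnMDl ?expn_gt0 //.
by rewrite (divn_small z_lt) addn0 modn_pow2_divn modn_mod.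
Qed.

Local Open Scope ring_scope.

Lemma distz_splice (t z x n w : nat) : t = (x %/ 2 ^ n %% 2 ^ w)%N ->
  `|(t * 2 ^ n + z)%N%:Z - (x %% 2 ^ (n + w))%N%:Z| = `|z%:Z - (x %% 2 ^ n)%N%:Z|.
Proof. by move=> ->; rewrite modn_pow2_split !PoszD; congr `|_|; lia. Qed.

Lemma dist_t_le1_congr (w x y : nat) : (x < 2 ^ w)%N -> (y < 2 ^ w)%N ->
  (dist_t w x y <= 1)%N ->
  exists2 c : int, c \in [:: -1; 0; 1] & (x%:Z + c = y%:Z %[mod (2 ^ w)%N%:Z])%Z.
Proof.
move=> x_lt y_lt d_le1.
suff [c c_in [q xc_eq]] : exists2 c : int, c \in [:: -1; 0; 1] &
    exists q : int, x%:Z + c = y%:Z + q * (2 ^ w)%N%:Z.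
  by exists c => //; rewrite xc_eq addrC modzMDl.
have cases : x = y \/ x = y.+1 \/ y = x.+1 \/
             (x.+1 = y + 2 ^ w)%N \/ (y.+1 = x + 2 ^ w)%N.
  move: d_le1; rewrite /dist_t geq_min; case: (leqP x y) => [le|lt];
    [rewrite (distnEr le) | rewrite (distnEl (ltnW lt))] => /orP[] d_le; lia.
case: cases => [->|[->|[->|[wrap|wrap]]]].
- by exists 0 => //; exists 0; lia.
- by exists (-1) => //; exists 0; lia.
- by exists 1 => //; exists 0; lia.
- by exists 1 => //; exists 1; lia.
- by exists (-1) => //; exists (-1); lia.
Qed.

Lemma eqz_mod4_unit (c d : int) : c \in [:: -1; 0; 1] -> d \in [:: -1; 0; 1] ->
  (c = d %[mod 4])%Z -> c = d.
Proof. by rewrite !inE => /or3P[]/eqP-> /or3P[]/eqP->. Qed.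

Lemma correction_mod4_iff (w mu t : nat) (c0 c : int) : (2 <= w)%N ->
  c0 \in [:: -1; 0; 1] -> c \in [:: -1; 0; 1] ->
  (mu%:Z + c0 = t%:Z %[mod (2 ^ w)%N%:Z])%Z ->
  ((mu %% 4)%:Z + c = (t %% 4)%:Z %[mod 4])%Z <-> c = c0.
Proof.
move=> w_ge2 c0_in c_in /eqP; rewrite eqz_mod_dvd => c0_eq.
have dvd4 : (4 %| 2 ^ w)%N := dvdn_exp2l 2 w_ge2.
have {c0_eq} /eqP c0_eq4 : (mu%:Z + c0 == t%:Z %[mod 4])%Z.
  by rewrite eqz_mod_dvd (dvdz_trans _ c0_eq) // dvdz_nat.
rewrite -!modz_nat modzDml modz_mod -c0_eq4.
split=> [|->] // c_eq.
apply: eqz_mod4_unit => //; apply/eqP; rewrite -(eqz_modDl mu%:Z); exact/eqP.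
Qed.

Lemma combine_results_step (E a b p r s mu mu' : nat) :
  (a <= b)%N -> (b.+2 <= E)%N ->
  (mu < 2 ^ (b + 2 - a))%N ->
  (mu' < 2 ^ (E.+1 - b))%N ->
  `| (mu'%:Z - (frac_bits s r b E)%:Z) | < (2 ^ p)%:Z ->
  bits_sub (E.+1 - b) mu' 1 2 = frac_bits s r b (b + 1) ->
  (dist_t (b + 2 - a) mu (frac_bits s r a (b + 1)) <= 1)%N ->
  (exists c : int, c \in [:: -1; 0; 1] /\
     ((mu %% 4)%:Z + c = (bits_sub (E.+1 - b) mu' 1 2)%:Z %[mod 4])%Z)
  /\
  (forall c : int, c \in [:: -1; 0; 1] ->
     ((mu %% 4)%:Z + c = (bits_sub (E.+1 - b) mu' 1 2)%:Z %[mod 4])%Z ->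
     let N := (E.+1 - b)%N in
     let len := (b + 2 - a)%N in
     let prefix : nat := `| ((mu%:Z + c) %% (2 ^ len)%:Z)%Z |%N in
     let mu'u : nat := concat_bits prefix (bits_sub N mu' 3 N) (N - 2) in
     `| (mu'u%:Z - (frac_bits s r a E)%:Z) | < (2 ^ p)%:Z /\
     bits_sub (E.+1 - a) mu'u 1 2 = frac_bits s r a (a + 1)).
Proof.
move=> ab bE.
(* The corrected prefix has h + 2 bits; n low bits of mu' follow the overlap. *)
set h := (b - a)%N; set n := (E - b.+1)%N; set X := (s * 2 ^ E %/ r)%N.
have window i j lo w : (j <= E)%N -> (E - j)%N = lo -> (j - i + 1)%N = w ->
    frac_bits s r i j = (X %/ 2 ^ lo %% 2 ^ w)%N.
  by move=> jE <- <-; rewrite (frac_bits_window s r i jE).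
rewrite (window b E 0 (n + 2)%N) ?divn1; try lia.
rewrite (window b (b + 1) n 2%N); try lia.
rewrite (window a (b + 1) n (h + 2)%N); try lia.
rewrite (window a E 0 (n + (h + 2))%N) ?divn1; try lia.
rewrite (window a (a + 1) (n + h)%N 2%N); try lia.
have -> : (E.+1 - b = n + 2)%N by lia.
have -> : (E.+1 - a = n + h + 2)%N by lia.
have -> : (b + 2 - a = h + 2)%N by lia.
have n_gt0 : (0 < n)%N by lia.
clearbody h n X; clear window ab bE.
rewrite !bits_sub_top2 => mu_lt mu'_lt close top dist.
set t := (X %/ 2 ^ n %% 2 ^ (h + 2))%N in dist *.
have t_lt : (t < 2 ^ (h + 2))%N by rewrite ltn_pmod ?expn_gt0.
have [c0 c0_in c0_eq] := dist_t_le1_congr mu_lt t_lt dist.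
have h2 : (2 <= h + 2)%N by rewrite leq_addl.
have top4 : (mu' %/ 2 ^ n %% 4 = t %% 4)%N.
  by rewrite top /t (modn_dvdm _ (dvdn_exp2l 2 h2)).
rewrite top4; split.
  by exists c0; split; last apply/(correction_mod4_iff h2 c0_in c0_in c0_eq).
move=> c c_in /(correction_mod4_iff h2 c0_in c_in c0_eq) -> N len prefix mu'u.
rewrite /mu'u; have -> : prefix = t by rewrite /prefix /len c0_eq modz_nat modn_small.
rewrite /concat_bits /N addnK bits_sub_drop2 //.
split.
  rewrite (distz_splice _ erefl) -(distz_splice (mu' %% 2 ^ n) top).
  by rewrite -modn_pow2_split modn_small.
by rewrite bits_sub_top2 (splice_high_bits (ltn_pmod _ (expn_gt0 2 n)) erefl).
Qed.

Theorem proposition4 (L k r p u mu mu' s0 : nat) :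
  (1 <= L)%N -> (2 <= k)%N -> (k %| L)%N -> (0 < r)%N -> (0 < p)%N ->
  (1 <= u)%N -> (u <= k - 1)%N ->
  (mu < 2 ^ (lpos L k u.+1 + 2 - lpos L k u))%N ->
  (mu' < 2 ^ (2 * L + p + 2 - lpos L k u.+1))%N ->
  (s0 < r)%N ->
  `| (mu'%:Z - (frac_bits s0 r (lpos L k u.+1) (2 * L + 1 + p))%:Z) | < (2 ^ p)%:Z ->
  bits_sub (2 * L + p + 2 - lpos L k u.+1) mu' 1 2
    = frac_bits s0 r (lpos L k u.+1) (lpos L k u.+1 + 1) ->
  (dist_t (lpos L k u.+1 + 2 - lpos L k u) mu
          (frac_bits s0 r (lpos L k u) (lpos L k u.+1 + 1)) <= 1)%N ->
  (exists c : int, c \in [:: -1; 0; 1] /\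
     ((mu %% 4)%:Z + c = (bits_sub (2 * L + p + 2 - lpos L k u.+1) mu' 1 2)%:Z %[mod 4])%Z)
  /\
  (forall c : int, c \in [:: -1; 0; 1] ->
     ((mu %% 4)%:Z + c = (bits_sub (2 * L + p + 2 - lpos L k u.+1) mu' 1 2)%:Z %[mod 4])%Z ->
     let N := (2 * L + p + 2 - lpos L k u.+1)%N in
     let len := (lpos L k u.+1 + 2 - lpos L k u)%N in
     let prefix : nat := `| ((mu%:Z + c) %% (2 ^ len)%:Z)%Z |%N in
     let mu'u : nat := concat_bits prefix (bits_sub N mu' 3 N) (N - 2) in
     `| (mu'u%:Z - (frac_bits s0 r (lpos L k u) (2 * L + 1 + p))%:Z) | < (2 ^ p)%:Z /\
     bits_sub (2 * L + p + 2 - lpos L k u) mu'u 1 2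
       = frac_bits s0 r (lpos L k u) (lpos L k u + 1)).
Proof.
move=> L_gt0 _ kL _ _ u_gt0 u_lt.
have /andP[ab bL] : (lpos L k u <= lpos L k u.+1 <= L)%N.
  by apply: lpos_succ_le; lia.
rewrite (_ : (2 * L + p + 2 = (2 * L + 1 + p).+1)%N); last lia.
move=> mu_lt mu'_lt _; apply: (combine_results_step ab) => //; lia.
Qed.
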